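(* Let $n\ge 1$ and $p\in(0,1)^n$. Let $Y\in\{0,1\}$ be a random bit with $\mathbb{P}(Y=1)=\mathbb{P}(Y=0)=1/2$, and conditionally on $Y$ let $X_1,\ldots,X_n\in\{0,1\}$ be independent with $\mathbb{P}(X_i=1\mid Y=1)=\mathbb{P}(X_i=0\mid Y=0)=p_i$. Let $f^{\mathrm{OPT}}:\{0,1\}^n\to\{0,1\}$ be a decision rule minimizing $\mathbb{P}(f(X)\neq Y)$ over all $f:\{0,1\}^n\to\{0,1\}$, where $X=(X_1,\ldots,X_n)$. Let $w_i=\log\frac{p_i}{1-p_i}$. Then $$\mathbb{P}(f^{\mathrm{OPT}}(X)\neq Y)\ge\frac12\cdot 2^n\sqrt{\prod_{i=1}^n p_i(1-p_i)}\cdot\exp\Big(-\frac12\sqrt{\sum_{i=1}^n w_i^2}\Big).$$ *)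

From mathcomp Require Import all_boot all_order all_algebra.
From mathcomp Require Import all_classical all_reals all_analysis.
Set Implicit Arguments. Unset Strict Implicit. Unset Printing Implicit Defensive.
Import Order.TTheory GRing.Theory Num.Theory.
Local Open Scope ring_scope.

(* Joint law of (X, Y): Y uniform on {0,1} (bool: true = 1), and conditionally on Y
   the X_i are independent with P(X_i = Y | Y) = p_i.
   joint p x y = P(X = x, Y = y). *)
Definition joint {R : realType} {n : nat} (p : 'I_n -> R)
  (x : {ffun 'I_n -> bool}) (y : bool) : R :=
  2^-1 * \prod_(i < n) (if x i == y then p i else 1 - p i).

Definition err {R : realType} {n : nat} (p : 'I_n -> R)
  (f : {ffun 'I_n -> bool} -> bool) : R :=
  \sum_(y : bool) \sum_(x : {ffun 'I_n -> bool}) joint p x y * (f x != y)%:R.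

Definition weight {R : realType} {n : nat} (p : 'I_n -> R) (i : 'I_n) : R :=
  ln (p i / (1 - p i)).

From mathcomp Require Import all_boot all_order all_algebra.
From mathcomp Require Import all_classical all_reals all_analysis.
From mathcomp Require Import ring lra.
Import Order.TTheory GRing.Theory Num.Theory.
Local Open Scope ring_scope.

(* Write P(x, y) = 2^-1 e^(L(x, y)) with L the log-likelihood.  The error of any
   decision rule is at least sum_x min_y P(x, y) = 2^-1 sum_x e^((C - |D x|) / 2),
   where C = L(x, 1) + L(x, 0) = ln (prod_i p_i (1 - p_i)) does not depend on x and
   D x = L(x, 1) - L(x, 0) = sum_i (+-w_i) is the log-likelihood ratio.  Jensen's
   inequality for exp over the 2^n points x reduces the bound to the mean of |D|,
   and by Cauchy-Schwarz and the orthogonality of the sign vectors this mean is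
   at most sqrt (mean D^2) = sqrt (sum_i w_i^2). *)

Lemma ln_prod {R : realType} {I : finType} (q : I -> R) :
  (forall i, 0 < q i) -> ln (\prod_i q i) = \sum_i ln (q i).
Proof.
move=> q_gt0; rewrite -[RHS]expRK expR_sum; congr ln.
by apply: eq_bigr => i _; rewrite lnK ?posrE.
Qed.

Lemma sqrtr_expR_ln {R : realType} (q : R) : 0 < q -> Num.sqrt q = expR (ln q / 2).
Proof. by move=> q_gt0; rewrite -powR12_sqrt ?ltW // /powR gt_eqF // mulrC. Qed.

Lemma sum_norm_le_sqrt {R : rcfType} {I : finType} (a : I -> R) :
  \sum_i `|a i| <= Num.sqrt (#|I|%:R * \sum_i a i ^+ 2).
Proof.
set S := \sum_i `|a i|; set N : R := #|I|%:R.
have [I0|I_gt0] := posnP #|I|.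
  by rewrite /S big1 ?sqrtr_ge0 // => i _; move: (max_card (pred1 i)); rewrite I0 card1.
have N_gt0 : 0 < N by rewrite ltr0n.
have dev : 0 <= N * (N * \sum_i a i ^+ 2 - S ^+ 2).
  have -> : N * (N * \sum_i a i ^+ 2 - S ^+ 2) = \sum_i (N * `|a i| - S) ^+ 2.
    under [RHS]eq_bigr => i _ do
      rewrite sqrrB exprMn real_normK ?num_real // -mulrnAl -mulrA mulrnAl.
    rewrite !big_split /= sumrN sumrMnl -mulr_suml -!mulr_sumr -/S sumr_const.
    by rewrite -mulr_natl -mulr_natr -/N; ring.
  by apply: sumr_ge0 => i _; apply: sqr_ge0.
have sqr_sum_ge0 : 0 <= \sum_i a i ^+ 2 by apply: sumr_ge0 => i _; apply: sqr_ge0.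
rewrite -[S]ger0_norm ?sumr_ge0 // -sqrtr_sqr ler_sqrt ?mulr_ge0 //.
by move: dev; rewrite pmulr_rge0 // subr_ge0.
Qed.

Lemma jensen_expR {R : realType} {I : finType} (g : I -> R) : (0 < #|I|)%N ->
  #|I|%:R * expR ((\sum_i g i) / #|I|%:R) <= \sum_i expR (g i).
Proof.
move=> I_gt0; set N : R := #|I|%:R; set m := (\sum_i g i) / N.
have N_gt0 : 0 < N by rewrite ltr0n.
have tangent i : expR m * (1 + (g i - m)) <= expR (g i).
  by rewrite -[in leRHS](subrKC m (g i)) expRD ler_pM2l ?expR_gt0 ?expR_ge1Dx.
apply: le_trans (ler_sum _ (fun i _ => tangent i)).
rewrite -mulr_sumr big_split sumrB /= !sumr_const -mulr_natr -/N -[m *+ _]mulr_natr -/N.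
by rewrite /m divfK ?gt_eqF // subrr addr0 mul1r mulrC.
Qed.

Definition sgnb (R : pzRingType) (b : bool) : R := if b then 1 else -1.

Definition flip {I : finType} (i : I) (x : {ffun I -> bool}) : {ffun I -> bool} :=
  [ffun k => if k == i then ~~ x k else x k].

Lemma flipK {I : finType} (i : I) : involutive (flip i).
Proof. by move=> x; apply/ffunP => k; rewrite !ffunE; case: eqP; rewrite ?negbK. Qed.

Lemma sum_sgnb_mul (R : numDomainType) {I : finType} (i j : I) : i != j ->
  \sum_(x : {ffun I -> bool}) sgnb R (x i) * sgnb R (x j) = 0.
Proof.
move=> neq_ij; set S := (X in X = 0).
(* flipping coordinate i is a bijection that changes the sign of each summand *)
suff /eqP : S = - S by rewrite -addr_eq0 -mulr2n mulrn_eq0 => /eqP.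
rewrite {1}/S (reindex_inj (inv_inj (flipK i))) -sumrN.
apply: eq_bigr => x _; rewrite /flip !ffunE eqxx eq_sym (negbTE neq_ij) /sgnb.
by case: (x i); rewrite ?mulN1r ?mul1r ?opprK.
Qed.

Lemma sum_sqr_sgnb_comb {R : numDomainType} {I : finType} (w : I -> R) :
  \sum_(x : {ffun I -> bool}) (\sum_i sgnb R (x i) * w i) ^+ 2 =
  #|{ffun I -> bool}|%:R * \sum_i w i ^+ 2.
Proof.
have sgnb_sqr (b : bool) : sgnb R b ^+ 2 = 1 by case: b; rewrite /sgnb ?sqrrN expr1n.
under eq_bigr => x _ do rewrite expr2 big_distrl /=.
under eq_bigr => x _ do under eq_bigr => i _ do rewrite big_distrr /=.
rewrite exchange_big mulr_sumr; apply: eq_bigr => i _ /=.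
rewrite exchange_big (bigD1 i) //= [X in _ + X]big1 ?addr0 => [|j neq_ji].
  under eq_bigr => x _ do rewrite mulrACA -!expr2 sgnb_sqr mul1r.
  by rewrite sumr_const mulr_natl.
under eq_bigr => x _ do rewrite mulrACA.
by rewrite -big_distrl /= sum_sgnb_mul ?mul0r // eq_sym.
Qed.

Lemma card_ffun_bool (n : nat) : #|{ffun 'I_n -> bool}| = (2 ^ n)%N.
Proof. by rewrite card_ffun card_bool card_ord. Qed.

Lemma min_joint_le_err {R : realType} {n : nat} (p : 'I_n -> R)
    (f : {ffun 'I_n -> bool} -> bool) :
  \sum_x Num.min (joint p x true) (joint p x false) <= err p f.
Proof.
rewrite /err exchange_big /=; apply: ler_sum => x _; rewrite big_bool /=.
by case: (f x); rewrite /= mulr0 mulr1 ?addr0 ?add0r ?ge_min lexx ?orbT.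
Qed.

Section LogLikelihood.
Context {R : realType} {n : nat} (p : 'I_n -> R).
Hypothesis p_01 : forall i, 0 < p i < 1.

Definition loglik (x : {ffun 'I_n -> bool}) (y : bool) : R :=
  \sum_i ln (if x i == y then p i else 1 - p i).

Definition llr (x : {ffun 'I_n -> bool}) : R := \sum_i sgnb R (x i) * weight p i.

Let p_gt0 i : 0 < p i. Proof. by case/andP: (p_01 i). Qed.
Let onem_p_gt0 i : 0 < 1 - p i. Proof. by case/andP: (p_01 i) => _; rewrite subr_gt0. Qed.

Lemma joint_expR x y : joint p x y = 2^-1 * expR (loglik x y).
Proof.
rewrite /joint /loglik expR_sum; congr (_ * _); apply: eq_bigr => i _.
by rewrite lnK // posrE; case: ifP.
Qed.

Lemma loglikD x : loglik x true + loglik x false = ln (\prod_i (p i * (1 - p i))).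
Proof.
rewrite ln_prod => [|i]; last by rewrite mulr_gt0.
rewrite -big_split; apply: eq_bigr => i _; rewrite lnM ?posrE //.
by case: (x i) => //=; rewrite addrC.
Qed.

Lemma loglikB x : loglik x true - loglik x false = llr x.
Proof.
rewrite -sumrB; apply: eq_bigr => i _; rewrite /sgnb /weight ln_div ?posrE //.
by case: (x i); rewrite /= ?mul1r ?mulN1r ?opprB.
Qed.

Lemma min_joint_ge x :
  2^-1 * expR ((ln (\prod_i (p i * (1 - p i))) - `|llr x|) / 2)
  <= Num.min (joint p x true) (joint p x false).
Proof.
have := ler_norm (llr x); have := ler_norm (- llr x); rewrite normrN.
have := loglikD x; have := loglikB x => llrE loglik_sum Dx_le Dx_ge.
by rewrite le_min !joint_expR !ler_pM2l ?invr_gt0 // !ler_expR; apply/andP; split; lra.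
Qed.

Lemma sum_norm_llr_le :
  \sum_x `|llr x| <= 2 ^+ n * Num.sqrt (\sum_i weight p i ^+ 2).
Proof.
apply: (le_trans (sum_norm_le_sqrt llr)).
rewrite sum_sqr_sgnb_comb card_ffun_bool natrX mulrA -expr2 sqrtrM ?sqr_ge0 //.
by rewrite sqrtr_sqr ger0_norm ?exprn_ge0.
Qed.

Lemma sum_min_joint_ge :
  2^-1 * 2 ^+ n * Num.sqrt (\prod_i (p i * (1 - p i)))
    * expR (- (2^-1 * Num.sqrt (\sum_i weight p i ^+ 2)))
  <= \sum_x Num.min (joint p x true) (joint p x false).
Proof.
set s := Num.sqrt (\sum_i weight p i ^+ 2); set C := ln (\prod_i (p i * (1 - p i))).
pose g x := (C - `|llr x|) / 2.
have card : #|{ffun 'I_n -> bool}|%:R = 2 ^+ n :> R by rewrite card_ffun_bool natrX.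
have N_gt0 : 0 < 2 ^+ n :> R by rewrite exprn_gt0.
have prod_gt0 : 0 < \prod_i (p i * (1 - p i)) by apply: prodr_gt0 => i _; rewrite mulr_gt0.
have mean_g : C / 2 - s / 2 <= (\sum_x g x) / 2 ^+ n.
  have := sum_norm_llr_le; rewrite -/s ler_pdivlMr // /g -mulr_suml sumrB sumr_const.
  rewrite (_ : C *+ _ = C * 2 ^+ n); first lra.
  by rewrite -card mulr_natr.
apply: le_trans (ler_sum _ (fun x _ => min_joint_ge x)).
rewrite -mulr_sumr -!mulrA ler_pM2l ?invr_gt0 // -/C -card.
apply: le_trans (jensen_expR g _); last by rewrite card_ffun_bool expn_gt0.
by rewrite card ler_pM2l // sqrtr_expR_ln // -/C -expRD ler_expR; lra.
Qed.

End LogLikelihood.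

Theorem theorem4 (R : realType) (n : nat) (hn : (1 <= n)%N) (p : 'I_n -> R)
  (hp : forall i, 0 < p i < 1)
  (fopt : {ffun 'I_n -> bool} -> bool)
  (hopt : forall f : {ffun 'I_n -> bool} -> bool, err p fopt <= err p f) :
  2^-1 * 2 ^+ n * Num.sqrt (\prod_(i < n) (p i * (1 - p i)))
    * expR (- (2^-1 * Num.sqrt (\sum_(i < n) weight p i ^+ 2)))
  <= err p fopt.
Proof.
exact: le_trans (sum_min_joint_ge p hp) (min_joint_le_err p fopt).
Qed.
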